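(* Let $(W,S)$ be a chordal Coxeter system, let $A=\{a,b,c\}$ be a maximal irreducible simplex of $(W,S)$, and let $d\in S-(A\cup A^\perp)$ be such that $\{a,b,d\}$ is a simplex. Then $\{a,b\}\cup A^\perp$ is a $(c,d)$-separator of $S$.
   Context: Coxeter system $(W,S)$: $W=\langle S\mid (st)^{m(s,t)}\ (m(s,t)<\infty)\rangle$, $m(s,s)=1$, $m(s,t)=m(t,s)\in\{2,\dots,\infty\}$. $\Gamma(W,S)$: graph on $S$ with edge $\{s,t\}$ iff $s\ne t$, $m(s,t)<\infty$; chordal: every cycle of length $\ge4$ has a chord. A simplex is $A\subseteq S$ with all $m(s,t)<\infty$; $A$ is irreducible if the graph on $A$ with edges $m(s,t)\ge3$ is connected; a maximal irreducible simplex is an irreducible simplex not properly contained in another irreducible simplex. $A^\perp=\{s\in S: m(s,x)=2\ \forall x\in A\}$. For $c,d\in S$, $B\subseteq S$ is a $(c,d)$-separator of $S$ if $c,d\notin B$ and $c$ and $d$ lie in different connected components of $\Gamma(W,S)-B$. *)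

From mathcomp Require Import all_boot.
Set Implicit Arguments. Unset Strict Implicit. Unset Printing Implicit Defensive.

(* A Coxeter system (W,S) with S a finite set, given by its Coxeter matrix
   m : S -> S -> nat, where the value 0 encodes m(s,t) = infinity.
   (W is determined by the presentation; every notion below only depends on m.) *)
Definition coxeter_matrix (S : finType) (m : S -> S -> nat) : Prop :=
  (forall s, m s s = 1) /\
  (forall s t, m s t = m t s) /\
  (forall s t, s != t -> m s t != 1).

Section Coxeter.
Variables (S : finType) (m : S -> S -> nat).

Definition mfin (s t : S) : bool := m s t != 0.
Definition mge3 (s t : S) : bool := (m s t == 0) || (3 <= m s t).

Definition gedge : rel S := fun s t => (s != t) && mfin s t.

Definition chordal : Prop :=
  forall p : seq S, 4 <= size p -> uniq p -> cycle gedge p ->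
    exists x y, [/\ x \in p, y \in p, gedge x y, y != next p x & x != next p y].

Definition simplex (A : {set S}) : bool :=
  [forall s in A, forall t in A, mfin s t].

Definition irr_rel (A : {set S}) : rel S :=
  fun s t => [&& s \in A, t \in A, s != t & mge3 s t].
Definition irreducible (A : {set S}) : Prop :=
  forall s t, s \in A -> t \in A -> connect (irr_rel A) s t.

Definition irreducible_simplex (A : {set S}) : Prop :=
  simplex A /\ irreducible A.

Definition maximal_irreducible_simplex (A : {set S}) : Prop :=
  irreducible_simplex A /\
  forall B : {set S}, irreducible_simplex B -> A \subset B -> B = A.

Definition perp (A : {set S}) : {set S} :=
  [set s | [forall x in A, m s x == 2]].

Definition separator (B : {set S}) (c d : S) : Prop :=
  c \notin B /\ d \notin B /\
  ~~ connect (fun s t => [&& s \notin B, t \notin B & gedge s t]) c d.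

End Coxeter.

From mathcomp Require Import all_boot.
From mathcomp Require Import zify.
Set Implicit Arguments. Unset Strict Implicit. Unset Printing Implicit Defensive.

(* If c and d were joined by a path avoiding B = {a, b} u A^perp, a shortest
   one c = x_0, x_1, ..., x_k = d would be chordless.  The vertices a and b are
   off this path and adjacent to both its ends, so in the cycle that each of
   them closes up with the path, chordality forces a chord issued from that
   vertex; induction on the length of the path then makes a and b adjacent to
   x_1.  Hence x_1 is
   adjacent to all of A, while lying neither in A nor in A^perp: some
   m(x_1, y), y in A, is at least 3, so A u {x_1} is a larger irreducible
   simplex, contradicting the maximality of A. *)

Lemma last_take (T : Type) (x : T) (p : seq T) i :
  i <= size p -> last x (take i p) = nth x (x :: p) i.
Proof.
move=> le_ip; rewrite (last_nth x) size_takel //.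
by rewrite -[x :: take i p]/(take i.+1 (x :: p)) nth_take.
Qed.

Lemma last_drop (T : Type) (x y : T) (p : seq T) k :
  k < size p -> last y (drop k p) = last x p.
Proof.
by move=> lt_kp; rewrite -[in RHS](cat_take_drop k p) last_cat (drop_nth x lt_kp).
Qed.

Section ChordlessPaths.
Variables (T : eqType) (g : rel T).

Definition chordless (s : seq T) : Prop :=
  forall x0 i j, i.+1 < j < size s -> ~~ g (nth x0 s i) (nth x0 s j).

Lemma chordless_take n s : chordless s -> chordless (take n s).
Proof.
move=> chs x0 i j /andP [lt_ij]; rewrite size_take_min leq_min => /andP [lt_jn lt_js].
have lt_in : i < n by rewrite (ltn_trans _ lt_jn) // ltnW.
by rewrite !nth_take //; apply: chs; rewrite lt_ij.
Qed.

Lemma path_splice x p i k :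
  path g x p -> i <= k < size p -> g (nth x (x :: p) i) (nth x p k) ->
  path g x (take i p ++ drop k p).
Proof.
move=> pth /andP [le_ik lt_kp] gik.
have le_ip : i <= size p by rewrite (leq_trans le_ik) // ltnW.
rewrite cat_path (take_path i pth) /= last_take // (drop_nth x lt_kp) /= gik /=.
have: path g x (take k.+1 p ++ drop k.+1 p) by rewrite cat_take_drop.
by rewrite cat_path last_take // => /andP [].
Qed.

Definition chordal_rel : Prop :=
  forall p : seq T, 4 <= size p -> uniq p -> cycle g p ->
  exists x y, [/\ x \in p, y \in p, g x y, y != next p x & x != next p y].

Section Chordal.
Hypothesis g_sym : symmetric g.
Hypothesis g_irr : irreflexive g.
Hypothesis g_chordal : chordal_rel.

(* The pair (0, size q) is excluded: those two vertices are consecutive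
   along the closing edge of the cycle. *)
Lemma cycle_chord v q : 3 <= size q -> uniq (v :: q) -> cycle g (v :: q) ->
  exists i j, [/\ i.+1 < j <= size q, (i, j) != (0, size q)
                & g (nth v (v :: q) i) (nth v (v :: q) j)].
Proof.
move=> q3 uC cyc; set C := v :: q.
have [s [t [sC tC gst nts nst]]] := g_chordal (q3 : 4 <= size C) uC cyc.
wlog lt_st : s t sC tC gst nts nst / index s C < index t C.
  move=> hyp; case: (ltngtP (index s C) (index t C)) => [|gt_st|eq_st].
  - exact: hyp.
  - by apply: (hyp t s) => //; rewrite g_sym.
  - by move: gst; rewrite -(nth_index v sC) eq_st nth_index // g_irr.
have nextC z : z \in C -> next C z = nth v C (index z C).+1.
  by move=> zC; rewrite next_nth zC.
exists (index s C), (index t C); rewrite !nth_index //; split => //.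
- have le_tq : index t C <= size q by rewrite -ltnS -[(size q).+1]/(size C) index_mem.
  rewrite le_tq ltn_neqAle lt_st !andbT.
  by apply: contraNneq nts => eq_j; rewrite nextC // eq_j nth_index.
- rewrite xpair_eqE; apply: (contraNN _ nst) => /andP [/eqP i0 /eqP j_last].
  by rewrite nextC // j_last nth_default // -(nth_index v sC) i0.
Qed.

Lemma chordless_common_neighbour v x p :
  path g x p -> uniq (x :: p) -> chordless (x :: p) -> v \notin x :: p ->
  g v x -> g v (last x p) -> g v (head x p).
Proof.
have [n] := ubnP (size p); elim: n p => // n IH p lt_pn pth up chp vp gvx gvl.
have [le_p1 | lt_1p] := leqP (size p) 1.
  by case: (p) le_p1 gvl => [|y []].
have cyc : cycle g (v :: x :: p).
  by rewrite /cycle /= gvx rcons_path pth g_sym.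
have uC : uniq (v :: x :: p) by rewrite cons_uniq vp.
have [[|i] [j [/andP [lt_ij le_j] ne_ij gij]]] :=
  cycle_chord (lt_1p : 2 < size (x :: p)) uC cyc.
  case: j lt_ij le_j ne_ij gij => [//|[//|k]] _ le_k ne_k gvk.
  rewrite /= in le_k ne_k.
  have lt_kp : k.+1 < size p.
    by rewrite ltn_neqAle -ltnS le_k andbT; apply: contraNneq ne_k => ->.
  have -> : head x p = head x (take k.+1 p) by case: (p).
  apply: IH => //.
  - by rewrite size_takel ?(leq_trans lt_kp) // ltnW.
  - exact: take_path.
  - exact: (take_uniq k.+2 up).
  - by rewrite -[x :: take _ _]/(take k.+2 (x :: p)); apply: chordless_take.
  - by apply: contra vp; rewrite -[x :: take _ _]/(take k.+2 (x :: p)); apply: mem_take.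
  - by rewrite last_take ?(ltnW lt_kp) //= (set_nth_default v).
case: j lt_ij le_j ne_ij gij => [//|j] lt_ij le_j _ gij.
by have /negP[] := chp v i j (introT andP (conj lt_ij le_j)).
Qed.
End Chordal.
End ChordlessPaths.

Lemma connect_chordless_path (T : finType) (g : rel T) x y : connect g x y ->
  exists p, [/\ path g x p, last x p = y, uniq (x :: p) & chordless g (x :: p)].
Proof.
move=> /connectP [p0 pth0 ->{y}].
pose has_path n := [exists t : n.-tuple T, path g x t && (last x t == last x p0)].
have has_p0 : exists n, has_path n.
  by exists (size p0); apply/existsP; exists (in_tuple p0); rewrite pth0 eqxx.
case: (ex_minnP has_p0) => n /existsP [t /andP [pth_t /eqP last_t]] min_n.
case/shortenP: pth_t last_t => p pth up sub_p last_p.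
exists p; split => // x0 i j /andP [lt_ij lt_j]; apply/negP => gij.
have le_pn : size p <= n.
  by rewrite -(size_tuple t) uniq_leq_size //; case/andP: up.
case: j lt_ij lt_j gij => [//|k] lt_ik lt_kp gik.
have lt_ip : i < size (x :: p) by rewrite (ltn_trans _ lt_kp) // ltnW.
rewrite (set_nth_default x) // (set_nth_default x x0 lt_kp) /= in gik.
have ik : i <= k < size p by rewrite ltnW.
have: has_path (size (take i p ++ drop k p)).
  apply/existsP; exists (in_tuple (take i p ++ drop k p)).
  by rewrite path_splice //= last_cat (last_drop x) // last_p eqxx.
move/min_n; rewrite leqNgt => /negP; apply; apply: leq_trans le_pn.
rewrite size_cat size_drop size_takel //.
by move: lt_ik lt_kp; rewrite /=; lia.
Qed.

Definition induced (T : Type) (keep : pred T) (g : rel T) : rel T :=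
  fun s t => [&& keep s, keep t & g s t].

Lemma induced_path_all (T : Type) (keep : pred T) (g : rel T) x p :
  keep x -> path (induced keep g) x p -> all keep (x :: p).
Proof.
elim: p x => [|y p IH] x /= keep_x; first by rewrite keep_x.
by case/andP=> /and3P [_ keep_y _] /(IH _ keep_y); rewrite keep_x.
Qed.

Lemma chordless_induced (T : eqType) (keep : pred T) (g : rel T) s :
  all keep s -> chordless (induced keep g) s -> chordless g s.
Proof.
move=> /allP keep_s chs x0 i j /andP [lt_ij lt_js].
have lt_is : i < size s by rewrite (ltn_trans _ lt_js) // ltnW.
by have := chs x0 i j; rewrite lt_ij lt_js /induced !keep_s ?mem_nth //=; apply.
Qed.

Section ChordalSeparation.
Variables (T : finType) (g : rel T) (keep : pred T).
Hypothesis g_sym : symmetric g.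
Hypothesis g_irr : irreflexive g.
Hypothesis g_chordal : chordal_rel g.

Lemma connect_induced_common_neighbour c d :
  c != d -> connect (induced keep g) c d ->
  exists2 x, keep x && g c x & forall v, ~~ keep v -> g v c -> g v d -> g v x.
Proof.
move=> cd /connect_chordless_path [[|x p] [pth last_p up chp]].
  by rewrite -last_p eqxx in cd.
have keep_c : keep c by case/andP: pth => /and3P [].
have keep_p := induced_path_all keep_c pth.
exists x; first by case/andP: pth => /and3P [_ -> ->].
move=> v v_out gvc gvd.
apply: (chordless_common_neighbour g_sym g_irr g_chordal (x := c) (p := x :: p)) => //.
- by apply: sub_path pth => s t /and3P [].
- exact: chordless_induced keep_p chp.
- by apply: contra v_out => /(allP keep_p).
- by rewrite last_p.
Qed.
End ChordalSeparation.

Section CoxeterGraph.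
Variables (S : finType) (m : S -> S -> nat).
Hypothesis m_cox : coxeter_matrix m.

Lemma gedge_sym : symmetric (gedge m).
Proof. by case: m_cox => _ [m_sym _] s t; rewrite /gedge /mfin m_sym eq_sym. Qed.

Lemma gedge_irr : irreflexive (gedge m).
Proof. by move=> s; rewrite /gedge eqxx. Qed.

Lemma simplex_gedge A s t :
  simplex m A -> s \in A -> t \in A -> s != t -> gedge m s t.
Proof.
by move=> /forall_inP simA sA tA ne_st; rewrite /gedge ne_st (forall_inP (simA s sA)).
Qed.

Lemma irreducible_simplex_setU1 A s :
  irreducible_simplex m A -> {in A, forall t, mfin m s t} -> s \notin perp m A ->
  irreducible_simplex m (s |: A).
Proof.
case: m_cox => m_diag [m_sym m_ne1] [/forall_inP simA irrA] adj_s.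
rewrite inE => /forall_inPn [y yA my_ne2].
have irr_sub : subrel (irr_rel m A) (connect (irr_rel m (s |: A))).
  move=> u w /and4P [uA wA ne_uw m_uw]; apply: connect1.
  by rewrite /irr_rel !inE uA wA ne_uw m_uw !orbT.
have to_y u : u \in s |: A -> connect (irr_rel m (s |: A)) u y.
  rewrite in_setU1 => /orP [/eqP -> | uA];
    last exact: connect_sub irr_sub _ _ (irrA u y uA yA).
  have [<- // | ne_sy] := eqVneq s y.
  apply: connect1; rewrite /irr_rel !in_setU1 eqxx yA orbT ne_sy /mge3 /=.
  have := adj_s y yA; have := m_ne1 s y ne_sy; rewrite /mfin.
  by case: (m s y) my_ne2 => [|[|[|k]]].
split.
  apply/forall_inP => u; rewrite in_setU1 => /orP [/eqP -> | uA]; apply/forall_inP => t;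
    rewrite in_setU1 => /orP [/eqP -> | tA].
  - by rewrite /mfin m_diag.
  - exact: adj_s.
  - by rewrite /mfin m_sym; apply: adj_s.
  - exact: (forall_inP (simA u uA)).
have irr_sym : symmetric (irr_rel m (s |: A)).
  by move=> u w; rewrite /irr_rel /mge3 m_sym eq_sym; case: (u \in _); case: (w \in _).
move=> u w uA wA; apply: connect_trans (to_y u uA) _.
by rewrite (sym_connect_sym irr_sym); apply: to_y.
Qed.

Lemma maximal_simplex_neighbour_perp A s :
  maximal_irreducible_simplex m A -> {in A, forall t, gedge m t s} -> s \in perp m A.
Proof.
move=> [irrA maxA] adj_s; apply: contraT => s_perp.
have sA : s \notin A by apply/negP => /adj_s; rewrite gedge_irr.
have fin_s : {in A, forall t, mfin m s t}.
  by move=> t /adj_s; rewrite gedge_sym => /andP [].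
have := maxA _ (irreducible_simplex_setU1 irrA fin_s s_perp) (subsetUr _ _).
by move=> eqA; move: sA; rewrite -eqA setU11.
Qed.

Lemma notin_perp (A : {set S}) s : s \in A -> s \notin perp m A.
Proof.
by case: m_cox => m_diag _ sA; rewrite inE; apply/forall_inPn; exists s; rewrite ?m_diag.
Qed.
End CoxeterGraph.

Theorem lemma4p1 (S : finType) (m : S -> S -> nat) (a b c d : S) :
  coxeter_matrix m ->
  chordal m ->
  a != b -> b != c -> a != c ->
  maximal_irreducible_simplex m [set a; b; c] ->
  d \notin [set a; b; c] :|: perp m [set a; b; c] ->
  simplex m [set a; b; d] ->
  separator m ([set a; b] :|: perp m [set a; b; c]) c d.
Proof.
move=> m_cox m_chordal _ bc ac maxA.
set A := [set a; b; c] in maxA *; set B := [set a; b] :|: perp m A.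
rewrite in_setU negb_or => /andP [dA d_perp] simABd.
have [[simA _] _] := maxA.
have cA : c \in A by rewrite !inE eqxx !orbT.
have cB : c \notin B.
  rewrite in_setU negb_or notin_perp // andbT.
  by rewrite !inE negb_or (eq_sym c a) (eq_sym c b) ac bc.
have dB : d \notin B.
  by rewrite in_setU negb_or d_perp andbT; apply: contra dA; rewrite !inE => ->.
split=> //; split=> //; apply/negP => conn.
have cd : c != d by apply: contraNneq dA => <-.
have [x /andP [xB cx] adj_x] :=
  connect_induced_common_neighbour (gedge_sym m_cox) (@gedge_irr _ m) m_chordal cd conn.
have ab_sub e : {subset [set a; b] <= [set a; b; e]}.
  by move=> v; rewrite !inE => /orP [] ->; rewrite ?orbT.
have dD : d \in [set a; b; d] by rewrite !inE eqxx !orbT.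
have adj_ab v : v \in [set a; b] -> gedge m v x.
  move=> vab; have vB : v \in B by rewrite in_setU vab.
  apply: adj_x; first by rewrite negbK.
  - by apply: (simplex_gedge simA (ab_sub c v vab) cA); apply: contraNneq cB => <-.
  - by apply: (simplex_gedge simABd (ab_sub d v vab) dD); apply: contraNneq dB => <-.
have adjA : {in A, forall t, gedge m t x}.
  move=> t; rewrite !inE => /orP [/orP [] | ] /eqP -> //; apply: adj_ab;
    by rewrite !inE eqxx ?orbT.
move: xB; rewrite in_setU negb_or => /andP [_ /negP []].
exact: maximal_simplex_neighbour_perp maxA adjA.
Qed.
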